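(* Let $G^*$ be a finite graph in which every vertex and every edge is contained in a triangle, and consider the domination game on $G^*$ in which Dominator makes the odd-numbered moves and always plays greedily (as defined in the context), while Staller plays arbitrary legal moves. If $i$ is odd and the $i$th turn belongs to Phase 1, then either $g_i+g_{i+1}\ge 72$, or the game ends with the $i$th turn and $g_i>36$.
   Context: For a vertex $v$, $N[v]$ is $v$ together with its neighbors, $N[S]=\bigcup_{v\in S}N[v]$. Domination game: Dominator (odd turns) and Staller (even turns) alternately choose vertices $p_1,p_2,\dots$; with $D_i=\{p_1,\dots,p_i\}$ ($D_0=\emptyset$) each move must satisfy $N[p_i]\setminus N[D_{i-1}]\neq\emptyset$; the game ends when $N[D_i]=V(G^* )$. After turn $i$ ($i\ge0$) a vertex $v$ is white if $v\notin N[D_i]$, blue if $v\in N[D_i]$ but $N[v]\not\subseteq N[D_i]$, and red if $N[v]\subseteq N[D_i]$. The W-degree of $v$ after turn $i$ is its number of white neighbors. Phases: for odd $i$, if after turn $i-1$ there is a white vertex of W-degree at least $4$ or a blue vertex of W-degree at least $5$, then turns $i$ and $i+1$ (if it exists) belong to Phase 1; otherwise they belong to Phase 2. In Phase 1 the weight of a vertex is $20$ if white, $12$ if blue, $0$ if red; the weight after turn $i$ is the sum of vertex weights, and $g_i$ is the weight after turn $i-1$ minus the weight after turn $i$. Dominator plays greedily: in each of his turns he chooses a legal vertex maximizing $g_i$. *)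

From mathcomp Require Import all_boot all_order all_algebra.
Set Implicit Arguments. Unset Strict Implicit. Unset Printing Implicit Defensive.
Import GRing.Theory Num.Theory.

Section Game.
Variables (T : finType) (e : rel T).

Definition cnbh (v : T) : {set T} := [set u | (u == v) || e v u].
(* N[D] for D given as the sequence of moves played so far *)
Definition cnbhS (D : seq T) : {set T} := \bigcup_(v <- D) cnbh v.

Definition white (D : seq T) (v : T) : bool := v \notin cnbhS D.
Definition red (D : seq T) (v : T) : bool := cnbh v \subset cnbhS D.
Definition blue (D : seq T) (v : T) : bool := (v \in cnbhS D) && ~~ red D v.
Definition wdeg (D : seq T) (v : T) : nat := #|[set u | e v u & white D u]|.

Definition legal (D : seq T) (p : T) : bool := ~~ (cnbh p \subset cnbhS D).

(* Phase-1 condition evaluated on the state D (after turn i-1) *)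
Definition phase1 (D : seq T) : bool :=
  [exists v, (white D v && (4 <= wdeg D v)) || (blue D v && (5 <= wdeg D v))].

Definition vweight (D : seq T) (v : T) : nat :=
  if white D v then 20 else if red D v then 0 else 12.
Definition weight (D : seq T) : nat := \sum_(v : T) vweight D v.

(* g_i for the (1-indexed) game sequence s : weight after turn i-1 minus
   weight after turn i *)
Definition gain (s : seq T) (i : nat) : int :=
  ((weight (take i.-1 s))%:Z - (weight (take i s))%:Z)%R.

Definition complete_game (s : seq T) : Prop :=
  (forall k, k < size s -> forall x0 : T, legal (take k s) (nth x0 s k)) /\
  cnbhS s = [set: T].

(* Dominator (odd turns i = k+1, k even) plays greedily in Phase 1 turns *)
Definition greedy_dominator (s : seq T) : Prop :=
  forall k, k < size s -> ~~ odd k -> phase1 (take k s) ->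
    forall v, legal (take k s) v ->
      ((weight (take k s))%:Z - (weight (rcons (take k s) v))%:Z
      <= gain s k.+1)%R.

End Game.

Definition every_vertex_in_triangle (T : finType) (e : rel T) : Prop :=
  forall v, exists u w, [/\ e v u, e v w & e u w].
Definition every_edge_in_triangle (T : finType) (e : rel T) : Prop :=
  forall u v, e u v -> exists w, e u w /\ e v w.

(* In Phase 1 every move pays for itself: each vertex that the move newly
   dominates loses at least 8 (20 -> 12 or 0), and the played vertex, whose
   closed neighbourhood is now dominated, loses a further 12 by turning red.
   The Phase-1 condition yields a vertex with at least five undominated
   vertices in its closed neighbourhood, so the greedy Dominator gains at least
   5 * 8 + 12 = 52, and any legal reply of Staller gains at least 8 + 12 = 20. *)

From mathcomp Require Import all_boot all_order all_algebra.
From mathcomp Require Import zify.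
Import Order.TTheory GRing.Theory Num.Theory.

Set Implicit Arguments. Unset Strict Implicit.

Lemma sum_mem_card (I : finType) (A : {set I}) :
  (\sum_(i : I) (i \in A) = #|A|)%N.
Proof.
by rewrite -sum1_card [RHS]big_mkcond; apply: eq_bigr => i _; case: (i \in A).
Qed.

Section PhaseOneWeights.
Variables (T : finType) (e : rel T).

Lemma cnbh_refl (x : T) : x \in cnbh e x.
Proof. by rewrite inE eqxx. Qed.

Lemma cnbhS_rcons (D : seq T) (x : T) :
  cnbhS e (rcons D x) = cnbhS e D :|: cnbh e x.
Proof. by rewrite /cnbhS -cats1 big_cat big_seq1. Qed.

Lemma legalE (D : seq T) (x : T) :
  legal e D x = (0 < #|cnbh e x :\: cnbhS e D|)%N.
Proof. by rewrite /legal card_gt0 setD_eq0. Qed.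

Lemma vweight_rcons_le {D : seq T} {x : T} (y : T) : legal e D x ->
  (vweight e (rcons D x) y + 8 * (y \in cnbh e x :\: cnbhS e D)
     + 12 * (y \in [set x]) <= vweight e D y)%N.
Proof.
rewrite /legal /vweight /white /red cnbhS_rcons in_set1 in_setD => hx.
case: (eqVneq y x) => [->|y_neq_x].
  by rewrite subsetUr in_setU cnbh_refl orbT andbT (negPf hx); case: ifP.
rewrite muln0 addn0 in_setU.
case hyD: (y \in cnbhS e D) => /=.
  rewrite muln0 addn0.
  case hyred: (cnbh e y \subset cnbhS e D).
    by rewrite (subset_trans hyred (subsetUl _ _)).
  by case: ifP.
by case: (y \in cnbh e x) => //=; case: ifP.
Qed.

Lemma weight_rcons_le {D : seq T} {x : T} : legal e D x ->
  (weight e (rcons D x) + 8 * #|cnbh e x :\: cnbhS e D| + 12 <= weight e D)%N.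
Proof.
move=> hx.
have := leq_sum (index_enum T) (fun y (_ : true) => vweight_rcons_le y hx).
by rewrite 2!big_split -2!big_distrr /= !sum_mem_card cards1 muln1.
Qed.

Lemma gain_rcons (x0 : T) {s : seq T} {k : nat} : (k < size s)%N ->
  gain e s k.+1
  = ((weight e (take k s))%:Z
     - (weight e (rcons (take k s) (nth x0 s k)))%:Z)%R.
Proof. by move=> hk; rewrite /gain /= (take_nth x0 hk). Qed.

Lemma legal_gain_ge20 {s : seq T} {k : nat} {x0 : T} : (k < size s)%N ->
  legal e (take k s) (nth x0 s k) -> (20 <= gain e s k.+1)%R.
Proof.
move=> hk hx; rewrite (gain_rcons x0 hk).
by have := weight_rcons_le hx; move: hx; rewrite legalE; lia.
Qed.

Hypothesis eirr : irreflexive e.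

Lemma phase1_undominated_ge5 {D : seq T} : phase1 e D ->
  exists x, (5 <= #|cnbh e x :\: cnbhS e D|)%N.
Proof.
case/existsP=> x hx; exists x.
have white_nbrs : [set u | e x u & white e D u] \subset cnbh e x :\: cnbhS e D.
  by apply/subsetP => u; rewrite !inE => /andP[-> hu]; rewrite orbT andbT.
case/orP: hx => /andP[hxD hdeg]; last first.
  exact: leq_trans hdeg (subset_leq_card white_nbrs).
have white_cnbh :
    x |: [set u | e x u & white e D u] \subset cnbh e x :\: cnbhS e D.
  by rewrite subUset white_nbrs sub1set in_setD cnbh_refl !andbT.
apply: leq_trans (subset_leq_card white_cnbh).
by rewrite cardsU1 inE eirr.
Qed.

Lemma greedy_gain_ge52 {s : seq T} {k : nat} : greedy_dominator e s ->
  (k < size s)%N -> ~~ odd k -> phase1 e (take k s) ->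
  (52 <= gain e s k.+1)%R.
Proof.
move=> hgreedy hk hk_even hph; have [x hx] := phase1_undominated_ge5 hph.
have hlx : legal e (take k s) x by rewrite legalE (leq_trans _ hx).
by have := hgreedy k hk hk_even hph x hlx; have := weight_rcons_le hlx; lia.
Qed.

End PhaseOneWeights.

Local Open Scope ring_scope.

Theorem lemma2 (T : finType) (e : rel T)
  (esym : symmetric e) (eirr : irreflexive e)
  (hv : every_vertex_in_triangle e) (he : every_edge_in_triangle e)
  (s : seq T) (hgame : complete_game e s) (hgreedy : greedy_dominator e s)
  (i : nat) (hodd : odd i) (hi : (0 < i <= size s)%N)
  (hph : phase1 e (take i.-1 s)) :
  ((i < size s)%N /\ 72 <= gain e s i + gain e s i.+1)
  \/ (cnbhS e (take i s) = [set: T] /\ 36 < gain e s i).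
Proof.
case: hgame => hlegal hdominated.
case: i hodd hi hph => [//|k] /= hk_even hk hph.
have g52 := greedy_gain_ge52 eirr hgreedy hk hk_even hph.
case: (ltnP k.+1 (size s)) => hend.
  have x0 : T by case: (s) hend.
  have g20 := legal_gain_ge20 hend (hlegal _ hend x0).
  by left; split=> //; have := lerD g52 g20; lia.
have hsize : k.+1 = size s by apply/eqP; rewrite eqn_leq hk hend.
right; split; first by rewrite hsize take_size.
exact: lt_le_trans g52.
Qed.
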